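(* The operator $\log S^t=\sum_{k=1}^\infty\frac{(-1)^{k-1}}{k}(S^t-1)^k$ is well defined on $\mathfrak{h}^1[t]$ (on each word only finitely many terms are nonzero), and for every word $w$ of length $n$, \[(\log S^t)(w)=t\sum_{r\in R_n,\ \sigma(r)=1}\mathrm{Con}_r(w)=t\,(\log S)(w),\] where $S=S^1$ is obtained by substituting $t=1$.
   Context: Let $\mathfrak{A}$ be a commutative $\mathbb{Q}$-algebra, $A$ a set of letters, and $\mathfrak{h}^1$ the non-commutative polynomial algebra over $\mathfrak{A}$ in the letters of $A$ (the free $\mathfrak{A}$-module on words, i.e. finite sequences of letters including the empty word $1$, with concatenation product). Let $\mathfrak{z}\subset\mathfrak{h}^1$ be the $\mathfrak{A}$-submodule spanned by $A$, and assume $\mathfrak{z}$ carries a commutative associative (not necessarily unital) $\mathfrak{A}$-bilinear product $\circ\colon\mathfrak{z}\times\mathfrak{z}\to\mathfrak{z}$. This is extended to an action of $\mathfrak{z}$ on $\mathfrak{h}^1$ by $a\circ 1=0$ and $a\circ(bw)=(a\circ b)w$ for $a,b\in A$ and words $w$, extended $\mathfrak{A}$-bilinearly. Let $t$ be an indeterminate, $\mathfrak{h}^1[t]=\mathfrak{h}^1\otimes_{\mathbb{Q}}\mathbb{Q}[t]$, with all structures extended $\mathfrak{A}[t]$-linearly. Define the $\mathfrak{A}[t]$-linear operator $S^t$ on $\mathfrak{h}^1[t]$ by $S^t(1)=1$ and $S^t(aw)=aS^t(w)+t\,a\circ S^t(w)$ for $a\in A$ and words $w$; for an element $\alpha$ of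 a commutative $\mathfrak{A}$-algebra, $S^\alpha$ denotes the operator obtained by substituting $\alpha$ for $t$. For $n\geq 0$, let $R_n$ be the set of strictly increasing sequences $r=(r_0,\ldots,r_s)$ of integers in $\{0,\ldots,n\}$ with $r_0=0$, $r_s=n$; put $\sigma(r)=n-s$. For a word $w=a_1\cdots a_n$, $\mathrm{Con}_r(w)=b_1\cdots b_s$ with $b_i=a_{r_{i-1}+1}\circ\cdots\circ a_{r_i}$. *)

From HB Require Import structures.
From mathcomp Require Import all_boot all_order all_algebra.
Set Implicit Arguments. Unset Strict Implicit. Unset Printing Implicit Defensive.
Import Order.TTheory GRing.Theory Num.Theory.
Local Open Scope ring_scope.

(* Finite formal K-linear combinations of elements of T (elements of the free
   K-module on T), represented as lists of (coefficient, basis element). *)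
Definition Lin (K : Type) (T : Type) := seq (K * T).

Definition coefL (K : nmodType) (T : eqType) (x : Lin K T) (u : T) : K :=
  \sum_(p <- x | p.2 == u) p.1.

Definition eqL (K : nmodType) (T : eqType) (x y : Lin K T) : Prop :=
  forall u, coefL x u = coefL y u.
Notation "x =L y" := (eqL x y) (at level 70).

Definition scaleL (K : pzSemiRingType) (T : Type) (c : K) (x : Lin K T) : Lin K T :=
  [seq (c * p.1, p.2) | p <- x].

Definition oppL (K : pzRingType) (T : Type) (x : Lin K T) : Lin K T :=
  [seq (- p.1, p.2) | p <- x].

Definition mapL (K K' : Type) (T : Type) (f : K -> K') (x : Lin K T) : Lin K' T :=
  [seq (f p.1, p.2) | p <- x].

Section Ops.
Variables (K : comPzRingType) (A : eqType).
Variable circ : A -> A -> Lin K A.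

Definition circL (x y : Lin K A) : Lin K A :=
  flatten [seq [seq (p.1 * q.1 * r.1, r.2) | r <- circ p.2 q.2] | p <- x, q <- y].

Definition circW (a : A) (w : seq A) : Lin K (seq A) :=
  if w is b :: w' then [seq (r.1, r.2 :: w') | r <- circ a b] else [::].

Fixpoint Sword (t : K) (w : seq A) : Lin K (seq A) :=
  match w with
  | [::] => [:: (1, [::])]
  | a :: w' =>
      let s := Sword t w' in
      [seq (p.1, a :: p.2) | p <- s] ++
      flatten [seq scaleL (t * p.1) (circW a p.2) | p <- s]
  end.

Definition SL (t : K) (x : Lin K (seq A)) : Lin K (seq A) :=
  flatten [seq scaleL p.1 (Sword t p.2) | p <- x].

Definition Dop (t : K) (x : Lin K (seq A)) : Lin K (seq A) := SL t x ++ oppL x.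

Definition Dpow (t : K) (k : nat) (w : seq A) : Lin K (seq A) :=
  iter k (Dop t) [:: (1, w)].

Definition logpart (c : nat -> K) (t : K) (N : nat) (w : seq A) : Lin K (seq A) :=
  flatten [seq scaleL (c k) (Dpow t k w) | k <- iota 1 N].

Definition circs (l : seq A) : Lin K A :=
  if l is a :: l' then foldl (fun x b => circL x [:: (1, b)]) [:: (1, a)] l'
  else [::].

Definition prodz (bs : seq (Lin K A)) : Lin K (seq A) :=
  foldr (fun b acc => [seq (p.1 * q.1, p.2 :: q.2) | p <- b, q <- acc])
        [:: (1, [::])] bs.

(* Con_r(w) with b_i = a_{r_{i-1}+1} o ... o a_{r_i} *)
Definition Con (r : seq nat) (w : seq A) : Lin K (seq A) :=
  prodz (pairmap (fun i j => circs (take (j - i) (drop i w))) (head 0%N r) (behead r)).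

End Ops.

Definition inRn (n : nat) (r : seq nat) : bool :=
  [&& r != [::], sorted ltn r, all (fun i => i <= n)%N r,
      head 1%N r == 0%N & last 0%N r == n].

(* enumeration of R_n: all subsequences of (0,1,...,n) lying in R_n
   (every strictly increasing sequence in {0..n} is such a subsequence,
   obtained from a unique mask) *)
Definition Rn (n : nat) : seq (seq nat) :=
  [seq r <- [seq mask (tval m) (iota 0 n.+1) | m : (n.+1).-tuple bool] | inRn n r].

Definition sigma (n : nat) (r : seq nat) : nat := (n - (size r).-1)%N.

Definition sumCon (K : comPzRingType) (A : eqType) (circ : A -> A -> Lin K A)
  (w : seq A) : Lin K (seq A) :=
  flatten [seq Con circ r w | r <- Rn (size w) & sigma (size w) r == 1%N].

Definition logcoef (R : comAlgType rat) (k : nat) : R :=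
  (((-1) ^+ k.-1 / k%:R : rat) *: (1 : R)).

Definition circT (R : comAlgType rat) (A : eqType) (circ : A -> A -> Lin R A) :
  A -> A -> Lin {poly R} A := fun a b => mapL (fun c => c%:P) (circ a b).

From HB Require Import structures.
From mathcomp Require Import all_boot all_order all_algebra.
From mathcomp Require Import zify.
From Stdlib Require Import FunctionalExtensionality.
Import GRing.Theory.
Local Open Scope ring_scope.

Set Implicit Arguments. Unset Strict Implicit. Unset Printing Implicit Defensive.

(* Let D be the operator contracting one pair of adjacent letters,
   D(a w) = a D(w) + a∘w, so that D(w) = Σ_{σ(r)=1} Con_r(w).  The argument is
   a differential equation in t:
   - associativity of ∘ makes D commute with S^t, and d/dt S^t = S^t D;
   - hence d/dt (S^t-1)^k = k (S^t-1)^(k-1) S^t D, and as S^t = (S^t-1) + 1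
     the derivative of Σ_k (-1)^(k-1)/k (S^t-1)^k telescopes to D;
   - (S^t-1)^k vanishes on words of length < k (S^t is unitriangular), so the
     series is finite on each word, and it vanishes at t = 0.
   Thus (log S^t)(w) = t D(w); substituting t = 1 gives (log S)(w) = D(w).
   Elements of the free module are handled through their pairing with test
   functions T -> K; every operator is studied via its transpose on test
   functions, which turns the combinatorics of lists into identities of sums. *)

Section Pairing.
Variable K : comPzRingType.

Definition pairL (T : Type) (x : Lin K T) (h : T -> K) : K :=
  \sum_(p <- x) p.1 * h p.2.

Lemma pairL_nil T (h : T -> K) : pairL [::] h = 0.
Proof. by rewrite /pairL big_nil. Qed.

Lemma pairL_cat T (x y : Lin K T) h : pairL (x ++ y) h = pairL x h + pairL y h.
Proof. by rewrite /pairL big_cat. Qed.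

Lemma pairL_seq1 T c (u : T) h : pairL [:: (c, u)] h = c * h u.
Proof. by rewrite /pairL big_seq1. Qed.

Lemma pairL_flatten T (s : seq (Lin K T)) h :
  pairL (flatten s) h = \sum_(x <- s) pairL x h.
Proof. by rewrite /pairL big_flatten. Qed.

Lemma pairL_scale T c (x : Lin K T) h : pairL (scaleL c x) h = c * pairL x h.
Proof.
by rewrite /pairL big_map mulr_sumr; apply: eq_bigr => p _ /=; rewrite mulrA.
Qed.

Lemma pairL_opp T (x : Lin K T) h : pairL (oppL x) h = - pairL x h.
Proof. by rewrite /pairL big_map -sumrN; apply: eq_bigr => p _ /=; rewrite mulNr. Qed.

Lemma pairL_relabel T T' (g : T -> T') (x : Lin K T) h :
  pairL [seq (p.1, g p.2) | p <- x] h = pairL x (fun u => h (g u)).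
Proof. by rewrite /pairL big_map. Qed.

Lemma pairL_add T (x : Lin K T) f g :
  pairL x (fun u => f u + g u) = pairL x f + pairL x g.
Proof. by rewrite /pairL -big_split; apply: eq_bigr => p _; rewrite mulrDr. Qed.

Lemma pairL_sub T (x : Lin K T) f g :
  pairL x (fun u => f u - g u) = pairL x f - pairL x g.
Proof. by rewrite /pairL -sumrB; apply: eq_bigr => p _; rewrite mulrBr. Qed.

Lemma pairL_mull T (x : Lin K T) c f : pairL x (fun u => c * f u) = c * pairL x f.
Proof. by rewrite /pairL mulr_sumr; apply: eq_bigr => p _; rewrite mulrCA. Qed.

Lemma pairL0 T (x : Lin K T) : pairL x (fun _ => 0) = 0.
Proof. by rewrite /pairL big1 // => p _; rewrite mulr0. Qed.

Lemma eq_pairL T (x : Lin K T) f g : (forall u, f u = g u) -> pairL x f = pairL x g.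
Proof. by move=> e; apply: eq_bigr => p _; rewrite e. Qed.

Lemma pairL_swap T T' (x : Lin K T) (y : Lin K T') H :
  pairL x (fun u => pairL y (H u)) = pairL y (fun v => pairL x (fun u => H u v)).
Proof.
rewrite /pairL; under eq_bigr do rewrite mulr_sumr.
rewrite exchange_big; apply: eq_bigr => q _; rewrite mulr_sumr.
by apply: eq_bigr => p _; rewrite mulrCA.
Qed.

Section Indicators.
Variable T : eqType.

Definition indicator (v : T) : T -> K := fun u => (u == v)%:R.

Lemma pairL_indicator (x : Lin K T) v : pairL x (indicator v) = coefL x v.
Proof.
rewrite /pairL /coefL /indicator [RHS]big_mkcond; apply: eq_bigr => p _.
by case: (p.2 == v); rewrite ?mulr1 ?mulr0.
Qed.

Lemma pairL_support (x : Lin K T) (s : seq T) h :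
  uniq s -> (forall p, p \in x -> p.2 \in s) ->
  pairL x h = \sum_(u <- s) coefL x u * h u.
Proof.
move=> us sub; rewrite /coefL.
transitivity (\sum_(u <- s) \sum_(p <- x) (p.2 == u)%:R * (p.1 * h u)).
  rewrite exchange_big /pairL big_seq [RHS]big_seq; apply: eq_bigr => p px.
  rewrite (bigD1_seq p.2) ?sub //= eqxx mul1r big1 ?addr0 // => u.
  by rewrite eq_sym => /negbTE ->; rewrite mul0r.
apply: eq_bigr => u _; rewrite [in RHS]big_mkcond mulr_suml; apply: eq_bigr => p _.
by case: (p.2 == u); rewrite ?mul1r ?mul0r.
Qed.

Lemma pairL_eqL (x y : Lin K T) h : x =L y -> pairL x h = pairL y h.
Proof.
move=> e; set s := undup [seq p.2 | p <- x ++ y].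
have mem_s z : z \in x ++ y -> z.2 \in s.
  by move=> zxy; rewrite mem_undup; apply/mapP; exists z.
rewrite (@pairL_support x s) ?(@pairL_support y s) ?undup_uniq //.
- by apply: eq_bigr => u _; rewrite e.
- by move=> p py; apply: mem_s; rewrite mem_cat py orbT.
- by move=> p px; apply: mem_s; rewrite mem_cat px.
Qed.

Lemma eqL_pairL (x y : Lin K T) :
  (forall v, pairL x (indicator v) = pairL y (indicator v)) -> x =L y.
Proof. by move=> H u; rewrite -!pairL_indicator. Qed.
End Indicators.
End Pairing.

Section Transposes.
Variables (K : comPzRingType) (A : eqType) (circ : A -> A -> Lin K A).

(* D(w): the sum of the words obtained by contracting two adjacent letters *)
Fixpoint contract (w : seq A) : Lin K (seq A) :=
  match w with
  | [::] => [::]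
  | a :: w' => [seq (p.1, a :: p.2) | p <- contract w'] ++ circW circ a w'
  end.

Lemma pairL_circW_nil a (h : seq A -> K) : pairL (circW circ a [::]) h = 0.
Proof. exact: pairL_nil. Qed.

Lemma pairL_circW_cons a b w (h : seq A -> K) :
  pairL (circW circ a (b :: w)) h = pairL (circ a b) (fun l => h (l :: w)).
Proof. by rewrite /circW (pairL_relabel (fun l => l :: w)). Qed.

Lemma pairL_contract_nil (h : seq A -> K) : pairL (contract [::]) h = 0.
Proof. exact: pairL_nil. Qed.

Lemma pairL_contract_cons a w (h : seq A -> K) :
  pairL (contract (a :: w)) h =
  pairL (contract w) (fun u => h (a :: u)) + pairL (circW circ a w) h.
Proof. by rewrite /= pairL_cat (pairL_relabel (cons a)). Qed.

Lemma pairL_Sword_nil t (h : seq A -> K) : pairL (Sword circ t [::]) h = h [::].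
Proof. by rewrite /= pairL_seq1 mul1r. Qed.

Lemma pairL_Sword_cons t a w (h : seq A -> K) :
  pairL (Sword circ t (a :: w)) h =
  pairL (Sword circ t w) (fun u => h (a :: u))
    + t * pairL (Sword circ t w) (fun u => pairL (circW circ a u) h).
Proof.
rewrite /= pairL_cat (pairL_relabel (cons a)) pairL_flatten big_map; congr (_ + _).
rewrite /pairL mulr_sumr; apply: eq_bigr => p _.
by rewrite -/(pairL _ _) pairL_scale mulrA.
Qed.

Lemma pairL_circL (x y : Lin K A) g :
  pairL (circL circ x y) g = pairL x (fun a => pairL y (fun b => pairL (circ a b) g)).
Proof.
rewrite /circL pairL_flatten big_allpairs_dep /pairL; apply: eq_bigr => p _.
rewrite mulr_sumr; apply: eq_bigr => q _.
rewrite big_map mulr_sumr mulr_sumr; apply: eq_bigr => r _ /=.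
by rewrite !mulrA.
Qed.

(* transposes of S^t, D and (a ∘ _) acting on test functions *)
Definition Sdual t (h : seq A -> K) : seq A -> K := fun u => pairL (Sword circ t u) h.
Definition Ddual (h : seq A -> K) : seq A -> K := fun u => pairL (contract u) h.
Definition Cdual a (h : seq A -> K) : seq A -> K := fun u => pairL (circW circ a u) h.

Hypothesis circ_assoc : forall a b c : A,
  circL circ (circ a b) [:: (1, c)] =L circL circ [:: (1, a)] (circ b c).

Lemma circW_assoc a b v (h : seq A -> K) :
  pairL (circ a b) (fun l => Cdual l h v) = pairL (circW circ b v) (Cdual a h).
Proof.
case: v => [|c v].
  by rewrite pairL_circW_nil (eq_pairL _ (fun l => pairL_circW_nil l h)) pairL0.
rewrite /Cdual pairL_circW_cons.
under eq_pairL => l do rewrite pairL_circW_cons.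
under [RHS]eq_pairL => l do rewrite pairL_circW_cons.
have := pairL_eqL (fun l => h (l :: v)) (circ_assoc a b c).
rewrite !pairL_circL pairL_seq1 mul1r => <-.
by apply: eq_pairL => l; rewrite pairL_seq1 mul1r.
Qed.

Lemma circW_contract_comm a v h :
  pairL (circW circ a v) (Ddual h) = pairL (contract v) (Cdual a h).
Proof.
case: v => [|b v]; first by rewrite /= !pairL_nil.
rewrite pairL_circW_cons pairL_contract_cons /Ddual.
under eq_pairL => l do rewrite pairL_contract_cons.
rewrite pairL_add; congr (_ + _); last exact: circW_assoc.
by rewrite pairL_swap; apply: eq_pairL => u; rewrite /Cdual pairL_circW_cons.
Qed.

Lemma circW_Sword_comm t a w h :
  pairL (circW circ a w) (Sdual t h) = pairL (Sword circ t w) (Cdual a h).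
Proof.
case: w => [|b w]; first by rewrite pairL_circW_nil pairL_Sword_nil /Cdual pairL_circW_nil.
rewrite pairL_circW_cons pairL_Sword_cons /Sdual.
under eq_pairL => l do rewrite pairL_Sword_cons.
rewrite pairL_add pairL_mull; congr (_ + _ * _).
  by rewrite pairL_swap; apply: eq_pairL => u; rewrite /Cdual pairL_circW_cons.
by rewrite pairL_swap; apply: eq_pairL => u; rewrite circW_assoc.
Qed.

Lemma Sword_contract_comm t u h :
  pairL (Sword circ t u) (Ddual h) = pairL (contract u) (Sdual t h).
Proof.
elim: u h => [|a w IH] h; first by rewrite pairL_Sword_nil /Ddual !pairL_contract_nil.
rewrite pairL_Sword_cons pairL_contract_cons.
under eq_pairL => v do rewrite /Ddual pairL_contract_cons.
under [X in _ + _ * X]eq_pairL => v do rewrite -/(Ddual h) circW_contract_comm.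
under [in RHS]eq_pairL => v do rewrite /Sdual pairL_Sword_cons.
rewrite pairL_add pairL_add pairL_mull.
rewrite -/(Ddual (fun u => h (a :: u))) IH -/(Cdual a h) -/(Ddual (Cdual a h)) IH.
by rewrite -/(Sdual t h) circW_Sword_comm addrAC.
Qed.
End Transposes.

Section Iteration.
Variables (K : comPzRingType) (A : eqType) (circ : A -> A -> Lin K A).

Definition Udual t (h : seq A -> K) : seq A -> K := fun u => Sdual circ t h u - h u.

Lemma pairL_Dop t x h : pairL (Dop circ t x) h = pairL x (Udual t h).
Proof.
rewrite /Dop pairL_cat pairL_opp /Udual pairL_sub; congr (_ - _).
rewrite /SL pairL_flatten big_map /pairL; apply: eq_bigr => p _.
by rewrite -/(pairL _ _) pairL_scale.
Qed.

Lemma pairL_Dpow t k w h : pairL (Dpow circ t k w) h = iter k (Udual t) h w.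
Proof.
have iterE x g : pairL (iter k (Dop circ t) x) g = pairL x (iter k (Udual t) g).
  by elim: k g => [|k IH] g //; rewrite iterS pairL_Dop IH -iterSr.
by rewrite /Dpow iterE pairL_seq1 mul1r.
Qed.

Lemma pairL_logpart c t N w h :
  pairL (logpart circ c t N w) h = \sum_(k <- iota 1 N) c k * iter k (Udual t) h w.
Proof.
rewrite /logpart pairL_flatten big_map; apply: eq_bigr => k _.
by rewrite pairL_scale pairL_Dpow.
Qed.

Lemma pairL_circW_length a v (f : seq A -> K) :
  (forall z, size z = size v -> f z = 0) -> pairL (circW circ a v) f = 0.
Proof.
case: v => [|b v] f0; first exact: pairL_circW_nil.
by rewrite pairL_circW_cons (eq_pairL _ (fun l => f0 (l :: v) erefl)) pairL0.
Qed.

Lemma Sword_unitriangular t u (f : seq A -> K) :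
  (forall v, (size v < size u)%N -> f v = 0) -> pairL (Sword circ t u) f = f u.
Proof.
elim: u f => [|a w IH] f f0; first exact: pairL_Sword_nil.
rewrite pairL_Sword_cons IH; last by move=> v Hv; apply: f0.
rewrite IH; last first.
  by move=> v Hv; apply: pairL_circW_length => z Hz; apply: f0; rewrite Hz /= ltnS ltnW.
by rewrite pairL_circW_length ?mulr0 ?addr0 // => z Hz; apply: f0; rewrite Hz.
Qed.

Lemma Udual_iter_short t k h u : (size u < k)%N -> iter k (Udual t) h u = 0.
Proof.
elim: k u => [|k IH] u //= Hu.
rewrite /Udual /Sdual Sword_unitriangular ?subrr // => v Hv.
by apply: IH; apply: leq_trans Hv _.
Qed.

Lemma pairL_contract_short w (f : seq A -> K) :
  (forall v, (size v < size w)%N -> f v = 0) -> pairL (contract circ w) f = 0.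
Proof.
elim: w f => [|a w IH] f f0; first exact: pairL_contract_nil.
rewrite pairL_contract_cons IH ?add0r; last by move=> v Hv; apply: f0.
by apply: pairL_circW_length => z Hz; apply: f0; rewrite Hz.
Qed.

(* S^0 is the identity, hence (S^0 - 1)^k = 0 for k > 0 *)
Lemma Udual_iter_t0 k h u : (0 < k)%N -> iter k (Udual 0) h u = 0.
Proof.
have S0 v (f : seq A -> K) : pairL (Sword circ 0 v) f = f v.
  elim: v f => [|a v IH] f; first exact: pairL_Sword_nil.
  by rewrite pairL_Sword_cons mul0r addr0 IH.
by case: k => // k _; rewrite iterS /Udual /Sdual S0 subrr.
Qed.
End Iteration.

Lemma Dpow_nil (K : comPzRingType) (A : eqType) (circ : A -> A -> Lin K A) t w k :
  (size w < k)%N -> Dpow circ t k w =L [::].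
Proof.
by move=> Hk; apply: eqL_pairL => v; rewrite pairL_Dpow Udual_iter_short // pairL_nil.
Qed.

Lemma logpart_stable (K : comPzRingType) (A : eqType) (circ : A -> A -> Lin K A)
    c t w N N' :
  (forall k, (N < k)%N -> Dpow circ t k w =L [::]) -> (N <= N')%N ->
  logpart circ c t N' w =L logpart circ c t N w.
Proof.
move=> vanish NN'; apply: eqL_pairL => v; rewrite !pairL_logpart.
rewrite -(subnKC NN') iotaD big_cat /= [X in _ + X](_ : _ = 0) ?addr0 //.
rewrite big_seq big1 // => k; rewrite mem_iota => /andP [Nk _].
by rewrite -pairL_Dpow (pairL_eqL _ (vanish k _)) ?pairL_nil ?mulr0 // -add1n.
Qed.

Section Transport.
Variables (K K' : comPzRingType) (f : {rmorphism K -> K'}).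
Variables (A : eqType) (circ : A -> A -> Lin K A).

Definition mapcirc : A -> A -> Lin K' A := fun a b => mapL f (circ a b).

Lemma pairL_mapL T (x : Lin K T) h : f (pairL x h) = pairL (mapL f x) (fun u => f (h u)).
Proof.
by rewrite /pairL rmorph_sum big_map; apply: eq_bigr => p _; rewrite rmorphM.
Qed.

Lemma coefL_mapL (T : eqType) (x : Lin K T) v : coefL (mapL f x) v = f (coefL x v).
Proof.
rewrite -!pairL_indicator pairL_mapL.
by apply: eq_pairL => u; rewrite /indicator rmorph_nat.
Qed.

Lemma pairL_circW_map a v h :
  f (pairL (circW circ a v) h) = pairL (circW mapcirc a v) (fun u => f (h u)).
Proof.
case: v => [|b v]; first by rewrite !pairL_circW_nil rmorph0.
by rewrite !pairL_circW_cons pairL_mapL.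
Qed.

Lemma pairL_Sword_map t u h :
  f (pairL (Sword circ t u) h) = pairL (Sword mapcirc (f t) u) (fun u => f (h u)).
Proof.
elim: u h => [|a w IH] h; first by rewrite !pairL_Sword_nil.
rewrite !pairL_Sword_cons rmorphD rmorphM !IH; congr (_ + _ * _).
by apply: eq_pairL => u; rewrite pairL_circW_map.
Qed.

Lemma pairL_contract_map u h :
  f (pairL (contract circ u) h) = pairL (contract mapcirc u) (fun u => f (h u)).
Proof.
elim: u h => [|a w IH] h; first by rewrite !pairL_contract_nil rmorph0.
by rewrite !pairL_contract_cons rmorphD IH pairL_circW_map.
Qed.

Lemma Udual_iter_map t k h :
  (fun u => f (iter k (Udual circ t) h u)) =
  iter k (Udual mapcirc (f t)) (fun u => f (h u)).
Proof.
elim: k => [|k IH] //; rewrite !iterS -IH; apply: functional_extensionality => u.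
by rewrite /Udual /Sdual rmorphB pairL_Sword_map.
Qed.

Lemma mapcirc_assoc :
  (forall a b c : A, circL circ (circ a b) [:: (1, c)] =L circL circ [:: (1, a)] (circ b c)) ->
  forall a b c : A,
  circL mapcirc (mapcirc a b) [:: (1, c)] =L circL mapcirc [:: (1, a)] (mapcirc b c).
Proof.
move=> circ_assoc a b c.
have unitE (x : A) : [:: (1 : K', x)] = mapL f [:: (1, x)] by rewrite /mapL /= rmorph1.
have circL_map x y v : coefL (circL mapcirc (mapL f x) (mapL f y)) v =
    f (coefL (circL circ x y) v).
  rewrite -!pairL_indicator !pairL_circL [RHS]pairL_mapL.
  apply: eq_pairL => a'; rewrite [RHS]pairL_mapL; apply: eq_pairL => b'.
  rewrite [RHS]pairL_mapL; apply: eq_pairL => l.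
  by rewrite /indicator rmorph_nat.
by move=> v; rewrite !unitE /mapcirc !circL_map circ_assoc.
Qed.
End Transport.

Section Derivative.
Variables (R : comAlgType rat) (A : eqType) (circ : A -> A -> Lin R A).
Hypothesis circ_assoc : forall a b c : A,
  circL circ (circ a b) [:: (1, c)] =L circL circ [:: (1, a)] (circ b c).

Local Notation circX := (circT circ).

Definition dpairL T (x : Lin {poly R} T) (h : T -> {poly R}) : {poly R} :=
  \sum_(p <- x) p.1^`() * h p.2.

Lemma deriv_pairL T (x : Lin {poly R} T) h :
  (pairL x h)^`() = dpairL x h + pairL x (fun u => (h u)^`()).
Proof.
rewrite /pairL /dpairL (big_morph _ (@derivD _) (@deriv0 _)) -big_split.
by apply: eq_bigr => p _; rewrite derivM.
Qed.

Lemma dpairL_scale T c (y : Lin {poly R} T) h :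
  dpairL (scaleL c y) h = c^`() * pairL y h + c * dpairL y h.
Proof.
rewrite /dpairL /pairL big_map mulr_sumr mulr_sumr -big_split; apply: eq_bigr => q _ /=.
by rewrite derivM mulrDl !mulrA.
Qed.

Lemma dpairL_circW a v h : dpairL (circW circX a v) h = 0.
Proof.
case: v => [|b v]; first by rewrite /dpairL big_nil.
rewrite /dpairL /circW /circT /mapL !big_map big1 // => r _ /=.
by rewrite derivC mul0r.
Qed.

Lemma circX_assoc a b c :
  circL circX (circX a b) [:: (1, c)] =L circL circX [:: (1, a)] (circX b c).
Proof. exact: (mapcirc_assoc polyC circ_assoc). Qed.

Lemma deriv_Sword u h :
  dpairL (Sword circX 'X u) h = pairL (Sword circX 'X u) (Ddual circX h).
Proof.
elim: u h => [|a w IH] h.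
  by rewrite pairL_Sword_nil /Ddual pairL_contract_nil /dpairL big_seq1 -polyC1 derivC mul0r.
rewrite pairL_Sword_cons /dpairL /= big_cat big_map /= -/(dpairL _ (fun u => h (a :: u))).
rewrite big_flatten /= big_map.
under eq_bigr => p _ do
  rewrite -/(dpairL _ _) dpairL_scale dpairL_circW mulr0 addr0 derivM derivX mul1r.
rewrite IH.
under [in RHS]eq_pairL => v do rewrite /Ddual pairL_contract_cons.
rewrite pairL_add.
under [X in _ = _ + _ * X]eq_pairL => v do
  rewrite -/(Ddual circX h) (circW_contract_comm circX_assoc).
rewrite -addrA; congr (_ + _).
rewrite /pairL; under eq_bigr => p _ do rewrite mulrDl.
rewrite big_split /=; congr (_ + _).
rewrite -[X in _ = 'X * X]/(pairL (Sword circX 'X w) (Ddual circX (Cdual circX a h))).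
by rewrite -IH /dpairL mulr_sumr; apply: eq_bigr => p _; rewrite mulrA.
Qed.
End Derivative.

Lemma logcoef_mulK (R : comAlgType rat) k :
  (0 < k)%N -> logcoef R k * k%:R = (-1) ^+ k.-1.
Proof.
move=> k0; rewrite /logcoef -scalerAl mul1r -scaler_nat scalerA.
rewrite divfK; last by rewrite Num.Theory.pnatr_eq0 -lt0n.
by rewrite -in_algE rmorphXn rmorphN1.
Qed.

Lemma mulrSn_eq0 (R : comAlgType rat) (x : R) n : x *+ n.+1 = 0 -> x = 0.
Proof.
move=> H; have : ((n.+1)%:R : rat) *: x = 0 by rewrite scaler_nat.
move/(congr1 (fun y => ((n.+1)%:R : rat)^-1 *: y)).
by rewrite scalerA mulVf ?scale1r ?scaler0 // Num.Theory.pnatr_eq0.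
Qed.

Lemma poly_of_deriv (R : comAlgType rat) (p : {poly R}) c :
  p^`() = c%:P -> p`_0 = 0 -> p = 'X * c%:P.
Proof.
move=> dp p0; apply/polyP => j; rewrite coefXM; case: j => [|i] //=.
have := congr1 (fun q : {poly R} => q`_i) dp; rewrite coef_deriv coefC /=.
by case: i => [|i] /=; [rewrite mulr1n | move/mulrSn_eq0].
Qed.

Lemma telescope_alt (R : pzRingType) (a : nat -> R) N :
  \sum_(k <- iota 1 N) (-1) ^+ k.-1 * (a k.-1 + a k) = a 0%N - (-1) ^+ N * a N.
Proof.
elim: N => [|N IH]; first by rewrite big_nil expr0 mul1r subrr.
have -> : iota 1 N.+1 = iota 1 N ++ [:: N.+1] by rewrite -[N.+1]addn1 iotaD add1n addn1.
rewrite big_cat big_seq1 IH /= exprS mulN1r mulNr opprK.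
by rewrite mulrDr addrA subrK.
Qed.

Section LogSeries.
Variables (R : comAlgType rat) (A : eqType) (circ : A -> A -> Lin R A).
Hypothesis circ_assoc : forall a b c : A,
  circL circ (circ a b) [:: (1, c)] =L circL circ [:: (1, a)] (circ b c).

Local Notation circX := (circT circ).
Local Notation U := (Udual circX 'X).
Local Notation S := (Sdual circX 'X).
Local Notation D := (Ddual circX).

Lemma iterU_add k f g :
  iter k U (fun u => f u + g u) = fun u => iter k U f u + iter k U g u.
Proof.
elim: k => [|k IH] //; rewrite !iterS IH; apply: functional_extensionality => u.
by rewrite /Udual /Sdual pairL_add addrACA opprD.
Qed.

Lemma U_mull c f : U (fun u => c * f u) = fun u => c * U f u.
Proof.
by apply: functional_extensionality => u; rewrite /Udual /Sdual pairL_mull mulrBr.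
Qed.

Lemma S_iterU k g : S (iter k U g) = iter k U (S g).
Proof.
elim: k => [|k IH] //; rewrite !iterS -IH; apply: functional_extensionality => u.
by rewrite /Udual /Sdual pairL_sub.
Qed.

Lemma D_iterU k g : D (iter k U g) = iter k U (D g).
Proof.
elim: k => [|k IH] //; rewrite !iterS -IH; apply: functional_extensionality => u.
rewrite /Udual {1}/Ddual pairL_sub; congr (_ - _).
exact/esym/(Sword_contract_comm (circX_assoc circ_assoc)).
Qed.

Lemma deriv_U g u : (U g u)^`() = S (D g) u + U (fun v => (g v)^`()) u.
Proof. by rewrite /Udual derivB /Sdual deriv_pairL (deriv_Sword circ_assoc) addrA. Qed.

Lemma deriv_iterU h k u : (forall v, (h v)^`() = 0) ->
  (iter k U h u)^`() = k%:R * iter k.-1 U (S (D h)) u.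
Proof.
move=> h0; elim: k u => [|k IH] u; first by rewrite /= h0 mul0r.
rewrite iterS deriv_U.
have -> : (fun v => (iter k U h v)^`()) = (fun v => k%:R * iter k.-1 U (S (D h)) v).
  by apply: functional_extensionality => v; rewrite IH.
rewrite U_mull D_iterU S_iterU /=.
case: k {IH} => [|k] /=; first by rewrite mul0r addr0 mul1r.
by rewrite -iterS -[(k.+2)%:R]natr1 mulrDl mul1r addrC.
Qed.
Local Notation logX N w := (logpart circX (fun k => (logcoef R k)%:P) 'X N w).

(* the derivative of (log S^t)(w) is D(w): the series telescopes *)
Lemma deriv_logpart w v N : (size w <= N)%N ->
  (coefL (logX N w) v)^`() = (coefL (contract circ w) v)%:P.
Proof.
move=> wN.
have h0 u : (indicator {poly R} v u)^`() = 0.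
  by rewrite /indicator derivMn -polyC1 derivC mul0rn.
pose a j := iter j U (D (indicator _ v)) w.
have aN : a N = 0.
  rewrite /a -D_iterU /Ddual pairL_contract_short // => u Hu.
  by apply: Udual_iter_short; apply: leq_trans Hu wN.
have SDE : S (D (indicator _ v)) = fun u => U (D (indicator _ v)) u + D (indicator _ v) u.
  by apply: functional_extensionality => u; rewrite /Udual subrK.
rewrite -pairL_indicator pairL_logpart (big_morph _ (@derivD _) (@deriv0 _)).
transitivity (\sum_(k <- iota 1 N) (-1) ^+ k.-1 * (a k.-1 + a k)).
  apply: eq_big_seq => k; rewrite mem_iota => /andP [k1 _].
  rewrite derivM derivC mul0r add0r deriv_iterU // mulrA -(rmorph_nat polyC) -polyCM.
  rewrite logcoef_mulK // rmorphXn rmorphN1 SDE iterU_add addrC /a.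
  by case: k k1 => // k _ /=; rewrite -iterSr.
rewrite telescope_alt aN mulr0 subr0 /a /= /Ddual -pairL_indicator.
rewrite (pairL_contract_map polyC); apply: eq_pairL => u.
by rewrite /indicator rmorph_nat.
Qed.

Lemma logpart_coef0 w v N : (coefL (logX N w) v)`_0 = 0.
Proof.
rewrite -horner_coef0 -horner_evalE -pairL_indicator pairL_logpart rmorph_sum.
rewrite big1_seq // => k /andP [_]; rewrite mem_iota => /andP [k1 _] /=.
rewrite rmorphM /=.
have := Udual_iter_map (horner_eval 0) circX 'X k (indicator _ v).
move/(congr1 (fun F => F w)) => /= ->.
by rewrite [horner_eval 0 'X]horner_evalE hornerX Udual_iter_t0 // mulr0.
Qed.

Lemma logpart_coef w v N : (size w <= N)%N ->
  coefL (logX N w) v = 'X * (coefL (contract circ w) v)%:P.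
Proof. by move=> wN; apply: poly_of_deriv; [apply: deriv_logpart | apply: logpart_coef0]. Qed.
End LogSeries.

Lemma mapcirc_eval (R : comAlgType rat) (A : eqType) (circ : A -> A -> Lin R A) x :
  mapcirc (horner_eval x) (circT circ) = circ.
Proof.
apply: functional_extensionality => a; apply: functional_extensionality => b.
rewrite /mapcirc /circT /mapL -map_comp; elim: (circ a b) => //= [[c l] y] ->.
by rewrite horner_evalE hornerC.
Qed.

Lemma logpart_eval1 (R : comAlgType rat) (A : eqType) (circ : A -> A -> Lin R A) w v N :
  horner_eval 1 (coefL (logpart (circT circ) (fun k => (logcoef R k)%:P) 'X N w) v) =
  coefL (logpart circ (logcoef R) 1 N w) v.
Proof.
rewrite -!pairL_indicator !pairL_logpart rmorph_sum.
apply: eq_bigr => k _; rewrite rmorphM; congr (_ * _); first exact: hornerC.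
have := Udual_iter_map (horner_eval 1) (circT circ) 'X k (indicator _ v).
move/(congr1 (fun F => F w)) => /= ->.
rewrite mapcirc_eval [horner_eval 1 'X]horner_evalE hornerX; congr (iter _ _ _ _).
by apply: functional_extensionality => u; rewrite /indicator rmorph_nat.
Qed.

Section Contractions.
Variables (K : comPzRingType) (A : eqType) (circ : A -> A -> Lin K A).

Definition contract_at (w : seq A) (i : nat) : Lin K (seq A) :=
  match drop i w with
  | b :: w'' => [seq (p.1, take i w ++ p.2) | p <- circW circ b w'']
  | [::] => [::]
  end.

Lemma pairL_contract_at_cons a w i h :
  pairL (contract_at (a :: w) i.+1) h = pairL (contract_at w i) (fun u => h (a :: u)).
Proof.
rewrite /contract_at /=; case: (drop i w) => [|b w'']; first by rewrite !pairL_nil.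
by rewrite (pairL_relabel (fun u => (a :: take i w) ++ u)) (pairL_relabel (cat _)).
Qed.

Lemma contract_sum w h :
  pairL (contract circ w) h = \sum_(i <- iota 0 (size w).-1) pairL (contract_at w i) h.
Proof.
elim: w h => [|a w IH] h; first by rewrite pairL_contract_nil big_nil.
rewrite pairL_contract_cons IH /=.
case: w IH => [|b w] IH; first by rewrite /= !big_nil pairL_nil addr0.
rewrite /= big_cons addrC; congr (_ + _).
  by rewrite /contract_at /= (pairL_relabel (cat [::])).
rewrite -(addn0 1%N) iotaDl big_map; apply: eq_bigr => i _.
by rewrite add1n pairL_contract_at_cons.
Qed.
End Contractions.

Definition omit (n j : nat) : seq nat := [seq k <- iota 0 n.+1 | k != j].

Lemma mem_omit n j k : (k \in omit n j) = (k != j) && (k <= n)%N.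
Proof. by rewrite /omit mem_filter mem_iota add0n ltnS. Qed.

Lemma size_omit n j : (j <= n)%N -> size (omit n j) = n.
Proof.
move=> jn; rewrite /omit size_filter.
have := count_predC (pred1 j) (iota 0 n.+1).
rewrite (count_uniq_mem _ (iota_uniq 0 n.+1)) mem_iota add0n ltnS jn size_iota add1n.
by case=> E; rewrite -[in RHS]E.
Qed.

Lemma omit_split n i : (i.+2 <= n)%N ->
  omit n i.+1 = iota 0 i.+1 ++ iota i.+2 (n - i.+1).
Proof.
move=> Hi; rewrite /omit.
have -> : iota 0 n.+1 = iota 0 i.+1 ++ i.+1 :: iota i.+2 (n - i.+1).
  have -> : n.+1 = (i.+1 + (n - i.+1).+1)%N by rewrite addnS subnKC // ltnW.
  by rewrite iotaD.
rewrite filter_cat; congr (_ ++ _).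
  by apply/all_filterP/allP => k; rewrite mem_iota /= => Hk; rewrite neq_ltn Hk.
rewrite /= eqxx /=; apply/all_filterP/allP => k.
by rewrite mem_iota => /andP [Hk _]; rewrite neq_ltn Hk orbT.
Qed.

Lemma last_iota j k : last j (iota j.+1 k) = (j + k)%N.
Proof. by elim: k j => [|k IH] j /=; rewrite ?addn0 // IH addnS. Qed.

Lemma pairmap_iota (T : Type) (g : nat -> nat -> T) j k :
  pairmap g j (iota j.+1 k) = [seq g l l.+1 | l <- iota j k].
Proof. by elim: k j => [|k IH] j //=; rewrite IH. Qed.

Lemma drop_cons (T : Type) (w : seq T) j :
  (j < size w)%N -> exists x, drop j w = x :: drop j.+1 w.
Proof. by case: w => // x0 w' jw; exists (nth x0 (x0 :: w') j); apply: drop_nth. Qed.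

Section ConOmit.
Variables (K : comPzRingType) (A : eqType) (circ : A -> A -> Lin K A).
Local Notation single x := [:: ((1 : K), x)].
Local Notation block w i j := (circs circ (take (j - i) (drop i w))).

Lemma blocks_singletons w j k : (j + k <= size w)%N ->
  [seq block w l l.+1 | l <- iota j k] = [seq single x | x <- take k (drop j w)].
Proof.
elim: k j => [|k IH] j jkw; first by rewrite take0.
have [x Ex] : exists x, drop j w = x :: drop j.+1 w.
  by apply: drop_cons; apply: leq_trans jkw; rewrite addnS ltnS leq_addr.
by rewrite /= Ex subSnn /= IH ?take0 // addSn -addnS.
Qed.

Lemma blocks_omit w i : (i.+2 <= size w)%N ->
  exists b c, drop i w = b :: c :: drop i.+2 w /\
  pairmap (fun i j => block w i j) (head 0%N (omit (size w) i.+1)) (behead (omit (size w) i.+1))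
  = [seq single x | x <- take i w]
    ++ circL circ (single b) [:: (1, c)] :: [seq single x | x <- drop i.+2 w].
Proof.
move=> Hi; set n := size w in Hi *.
have [b Eb] : exists b, drop i w = b :: drop i.+1 w by apply: drop_cons; exact: ltnW.
have [c Ec] : exists c, drop i.+1 w = c :: drop i.+2 w by apply: drop_cons.
have Em : (n - i.+1 = (n - i.+2).+1)%N by rewrite subnSK.
exists b, c; split; first by rewrite Eb Ec.
rewrite omit_split // /= pairmap_cat pairmap_iota last_iota add0n Em /= pairmap_iota.
rewrite (blocks_singletons (j := 0%N)) ?drop0 ?add0n; last exact: ltnW (ltnW Hi).
congr (_ ++ _ :: _); first by rewrite -addn2 addKn Eb Ec /= take0.
by rewrite blocks_singletons ?subnKC // take_oversize // size_drop.
Qed.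

Lemma pairL_prodz_cons b bs h :
  pairL (prodz (b :: bs) : Lin K (seq A)) h =
  pairL b (fun l => pairL (prodz bs) (fun u => h (l :: u))).
Proof.
rewrite /= pairL_flatten big_map /pairL; apply: eq_bigr => p _.
by rewrite big_map mulr_sumr; apply: eq_bigr => q _ /=; rewrite mulrA.
Qed.

Lemma pairL_prodz_singletons s bs h :
  pairL (prodz ([seq single x | x <- s] ++ bs) : Lin K (seq A)) h =
  pairL (prodz bs) (fun u => h (s ++ u)).
Proof.
elim: s h => [|x s IH] h //.
by rewrite cat_cons pairL_prodz_cons pairL_seq1 mul1r IH.
Qed.

Lemma Con_omit w i h : (i.+2 <= size w)%N ->
  pairL (Con circ (omit (size w) i.+1) w) h = pairL (contract_at circ w i) h.
Proof.
move=> Hi; have [b [c [Ebc Eblocks]]] := blocks_omit Hi.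
rewrite /Con Eblocks.
rewrite pairL_prodz_singletons pairL_prodz_cons pairL_circL !pairL_seq1 !mul1r.
rewrite /contract_at Ebc (pairL_relabel (cat (take i w))) pairL_circW_cons.
apply: eq_pairL => l.
rewrite -[[seq single x | x <- drop i.+2 w]]cats0 pairL_prodz_singletons.
by rewrite /= pairL_seq1 mul1r cats0.
Qed.
End ConOmit.

Lemma mask_inj (T : eqType) (s : seq T) m1 m2 :
  uniq s -> size m1 = size s -> size m2 = size s -> mask m1 s = mask m2 s -> m1 = m2.
Proof.
elim: s m1 m2 => [|x s IH] m1 m2; first by move=> _ /size0nil -> /size0nil ->.
case: m1 => [|b1 m1] //; case: m2 => [|b2 m2] //.
move=> /= /andP [xs us] [s1] [s2].
case: b1; case: b2 => E.
- by case: E => /(IH _ _ us s1 s2) ->.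
- have := @mem_mask _ x m2 s; rewrite -E mem_head => /(_ isT).
  by rewrite (negbTE xs).
- have := @mem_mask _ x m1 s; rewrite E mem_head => /(_ isT).
  by rewrite (negbTE xs).
- by rewrite (IH _ _ us s1 s2 E).
Qed.

Lemma eq_omit n x r : sorted ltn r -> size r = n -> (x <= n)%N -> x \notin r ->
  all (fun i => i <= n)%N r -> r = omit n x.
Proof.
move=> srt sz xn xr rn.
apply: (irr_sorted_eq ltn_trans ltnn) => //.
  exact: (sorted_filter ltn_trans (fun k => k != _) (iota_ltn_sorted 0 n.+1)).
have sub : {subset r <= omit n x}.
  by move=> k kr; rewrite mem_omit (allP rn k kr) andbT; apply: contraNneq xr => <-.
have ur : uniq r := sorted_uniq ltn_trans ltnn srt.
by have [_] := uniq_min_size ur sub (eq_leq (etrans (size_omit xn) (esym sz))).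
Qed.

Lemma inRn_sigma1 n r : inRn n r -> sigma n r = 1%N ->
  exists2 i, (i.+2 <= n)%N & r = omit n i.+1.
Proof.
case/and5P => r_ne srt rn /eqP r0 /eqP rlast s1.
have r_gt0 : (0 < size r)%N by rewrite lt0n size_eq0.
have sz : size r = n by move: s1; rewrite /sigma; lia.
have [x xn xr] : exists2 x, x \in iota 0 n.+1 & x \notin r.
  apply/hasP; apply/negPn/negP => /hasPn H.
  have := uniq_leq_size (iota_uniq 0 n.+1) (fun k hk => negbNE (H k hk)).
  by rewrite size_iota sz ltnn.
move: xn; rewrite mem_iota add0n ltnS => xn.
have x0 : x != 0%N by apply: contraNneq xr => ->; rewrite -r0 -nth0 mem_nth.
have xlast : x != n.
  by apply: contraNneq xr => ->; rewrite -rlast -nth_last mem_nth // ltn_predL.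
exists x.-1; first by move: x0 xlast xn; lia.
by rewrite prednK ?lt0n //; apply: eq_omit.
Qed.

Lemma omit_inRn n i : (i.+2 <= n)%N ->
  inRn n (omit n i.+1) /\ sigma n (omit n i.+1) = 1%N.
Proof.
move=> Hi; split; last by rewrite /sigma size_omit; lia.
apply/and5P; split.
- by rewrite omit_split.
- exact: (sorted_filter ltn_trans _ (iota_ltn_sorted 0 n.+1)).
- by apply/allP => k; rewrite mem_omit => /andP [].
- by rewrite omit_split.
- by rewrite omit_split // last_cat -(subnSK Hi) /= last_iota subnKC.
Qed.

Lemma omit_mask n j : omit n j \in [seq mask (tval m) (iota 0 n.+1) | m : (n.+1).-tuple bool].
Proof.
have sz : size [seq k != j | k <- iota 0 n.+1] == n.+1 by rewrite size_map size_iota.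
by apply/imageP; exists (Tuple sz) => //; rewrite /omit filter_mask.
Qed.

Lemma Rn_sigma1_perm n :
  perm_eq [seq r <- Rn n | sigma n r == 1%N] [seq omit n i.+1 | i <- iota 0 n.-1].
Proof.
apply: uniq_perm.
- rewrite filter_uniq // filter_uniq // map_inj_uniq ?enum_uniq // => m1 m2 E.
  apply: val_inj; apply: (mask_inj (iota_uniq 0 n.+1)) => //;
  by rewrite size_tuple size_iota.
- rewrite map_inj_in_uniq ?iota_uniq // => i j; rewrite !mem_iota !add0n => Hi Hj E.
  apply/eqP; apply/negPn/negP => Hij.
  have : i.+1 \in omit n j.+1 by rewrite mem_omit eqSS Hij /= (leq_trans Hi (leq_pred n)).
  by rewrite -E mem_omit eqxx.
move=> r; rewrite !mem_filter; apply/idP/idP.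
  case/and3P => /eqP s1 Rr _; have [i Hi ->] := inRn_sigma1 Rr s1.
  by apply/mapP; exists i => //; rewrite mem_iota add0n; move: Hi; lia.
case/mapP => i; rewrite mem_iota add0n => Hi ->.
have [Rr s1] : inRn n (omit n i.+1) /\ sigma n (omit n i.+1) = 1%N.
  by apply: omit_inRn; move: Hi; lia.
by rewrite s1 eqxx Rr omit_mask.
Qed.

Lemma contract_sumCon (K : comPzRingType) (A : eqType) (circ : A -> A -> Lin K A) w v :
  coefL (contract circ w) v = coefL (sumCon circ w) v.
Proof.
rewrite -!pairL_indicator /sumCon pairL_flatten big_map.
rewrite (perm_big _ (Rn_sigma1_perm (size w))) big_map contract_sum.
apply: eq_big_seq => i; rewrite mem_iota add0n => /andP [_ Hi].
by rewrite Con_omit //; move: Hi; case: (size w) => // n; case: n.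
Qed.

Lemma coefL_scaleX (R : comNzRingType) (T : eqType) (s : Lin R T) v :
  coefL (scaleL 'X (mapL (fun c => c%:P) s)) v = 'X * (coefL s v)%:P.
Proof. by rewrite -pairL_indicator pairL_scale pairL_indicator (coefL_mapL polyC). Qed.

Unset Implicit Arguments. Set Strict Implicit.
Theorem proposition3p3 (R : comAlgType rat) (A : eqType)
  (circ : A -> A -> Lin R A)
  (circ_comm : forall a b : A, circ a b =L circ b a)
  (circ_assoc : forall a b c : A,
     circL circ (circ a b) [:: (1, c)] =L circL circ [:: (1, a)] (circ b c))
  (w : seq A) :
  (exists N : nat, forall k : nat, (N < k)%N -> Dpow (circT circ) 'X k w =L [::]) /\
  (exists M : nat, forall k : nat, (M < k)%N -> Dpow circ 1 k w =L [::]) /\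
  (forall N M : nat,
     (forall k : nat, (N < k)%N -> Dpow (circT circ) 'X k w =L [::]) ->
     (forall k : nat, (M < k)%N -> Dpow circ 1 k w =L [::]) ->
     logpart (circT circ) (fun k => (logcoef R k)%:P) 'X N w
       =L scaleL 'X (mapL (fun c => c%:P) (sumCon circ w))
     /\ scaleL 'X (mapL (fun c => c%:P) (sumCon circ w))
       =L scaleL 'X (mapL (fun c => c%:P) (logpart circ (logcoef R) 1 M w))).
Proof.
split; first by exists (size w) => k; apply: Dpow_nil.
split; first by exists (size w) => k; apply: Dpow_nil.
move=> N M HN HM.
have logX N' v : (size w <= N')%N ->
    coefL (logpart (circT circ) (fun k => (logcoef R k)%:P) 'X N' w) v =
    'X * (coefL (sumCon circ w) v)%:P.
  by move=> wN'; rewrite (logpart_coef circ_assoc) // contract_sumCon.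
split => v; rewrite !coefL_scaleX.
  by rewrite -(logpart_stable _ HN (leq_addr (size w) N)) logX // leq_addl.
rewrite -(logpart_stable _ HM (leq_addr (size w) M)) -logpart_eval1 logX ?leq_addl //.
by rewrite horner_evalE hornerM hornerX hornerC mul1r.
Qed.
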